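(* Let $(Q,\cdot)$ be a quasigroup satisfying $(xx)(yz)=(x(xy))z$ for all $x,y,z\in Q$ (an LC1-quasigroup). Then $Q$ satisfies $x(x(yz))=((xx)y)z$ for all $x,y,z\in Q$ (i.e. $Q$ is an LC3-quasigroup).
   Context: A quasigroup is a set $Q$ with a binary operation $\cdot$ (written as juxtaposition) such that for all $a,b\in Q$ each of the equations $ax=b$ and $ya=b$ has a unique solution in $Q$. *)

Definition is_quasigroup {Q : Type} (mul : Q -> Q -> Q) : Prop :=
  forall a b : Q,
    (exists x, mul a x = b /\ forall x', mul a x' = b -> x' = x) /\
    (exists y, mul y a = b /\ forall y', mul y' a = b -> y' = y).

Definition LC1 {Q : Type} (mul : Q -> Q -> Q) : Prop :=
  forall x y z : Q, mul (mul x x) (mul y z) = mul (mul x (mul x y)) z.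

Definition LC3 {Q : Type} (mul : Q -> Q -> Q) : Prop :=
  forall x y z : Q, mul x (mul x (mul y z)) = mul (mul (mul x x) y) z.


(* If x e = x, then LC1 with y := e gives (xx)(ez) = (xx)z, so e is a left
   identity; two such right units f, g satisfy f g = g = g g, hence f = g,
   and e is a two-sided identity.  LC1 with z := e then reads
   (xx)y = x(xy), and LC3 is LC1 rewritten by this law on both sides. *)

Section Quasigroup.

Variables (Q : Type) (mul : Q -> Q -> Q).
Hypothesis mul_quasigroup : is_quasigroup mul.

Lemma quasigroup_cancel_l (a u v : Q) : mul a u = mul a v -> u = v.
Proof.
  intros Huv.
  destruct (mul_quasigroup a (mul a v)) as [[w [_ Hw]] _].
  rewrite (Hw u Huv), (Hw v eq_refl). reflexivity.
Qed.

Lemma quasigroup_cancel_r (a u v : Q) : mul u a = mul v a -> u = v.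
Proof.
  intros Huv.
  destruct (mul_quasigroup a (mul v a)) as [_ [w [_ Hw]]].
  rewrite (Hw u Huv), (Hw v eq_refl). reflexivity.
Qed.

Lemma quasigroup_right_unit (x : Q) : exists e, mul x e = x.
Proof.
  destruct (mul_quasigroup x x) as [[e [He _]] _].
  exists e. exact He.
Qed.

Hypothesis mul_LC1 : LC1 mul.

Lemma LC1_right_unit_mul_l (x e : Q) : mul x e = x -> forall y, mul e y = y.
Proof.
  intros He y. apply (quasigroup_cancel_l (mul x x)).
  rewrite (mul_LC1 x e y), He. reflexivity.
Qed.

Lemma LC1_right_unit_mul_r (x e : Q) : mul x e = x -> forall y, mul y e = y.
Proof.
  intros He y.
  destruct (quasigroup_right_unit y) as [f Hf].
  assert (Hef : e = f).
  { apply (quasigroup_cancel_r f).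
    rewrite (LC1_right_unit_mul_l y f Hf f).
    apply (LC1_right_unit_mul_l x e He). }
  rewrite Hef. exact Hf.
Qed.

Lemma LC1_mul_square_l (x y : Q) : mul (mul x x) y = mul x (mul x y).
Proof.
  destruct (quasigroup_right_unit x) as [e He].
  rewrite <- (LC1_right_unit_mul_r x e He (mul x (mul x y))), <- (mul_LC1 x y e).
  rewrite (LC1_right_unit_mul_r x e He y). reflexivity.
Qed.

End Quasigroup.

Theorem mainTheorem6 (Q : Type) (mul : Q -> Q -> Q) :
  is_quasigroup mul -> LC1 mul -> LC3 mul.
Proof.
  intros Hq H1 x y z.
  rewrite <- (LC1_mul_square_l Q mul Hq H1), H1, (LC1_mul_square_l Q mul Hq H1).
  reflexivity.
Qed.
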